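(* Let $A, B \in\mathbb{C}^{n\times n}$ be matrices of index at most $1$. Then $A\leq\# B$ if and only if $A\leq^{GD1}B$, where $A\leq\# B$ means $A^2=BA$ and $R(A^* )\subseteq R(B^* )$.
   Context: For $A\in\mathbb{C}^{n\times n}$, $ind(A)$ is the smallest nonnegative integer $k$ with $\mathrm{rank}(A^k)=\mathrm{rank}(A^{k+1})$. $A\{1\}$ is the set of matrices $X$ with $AXA=A$. With $k=ind(A)$, $A\{GD\}$ is the set of matrices $X$ with $AXA=A$, $XA^{k+1}=A^k$, $A^{k+1}X=A^k$ (G-Drazin inverses). A GD1 inverse of $A$ is a matrix $A^{GD1}=A^{GD}AA^-$ with $A^-\in A\{1\}$, $A^{GD}\in A\{GD\}$. We write $A\leq^{GD1}B$ if $AA^{GD1}=BA^{GD1}$ and $A^{GD1}A=A^{GD1}B$ for some GD1 inverse $A^{GD1}$ of $A$. $A^*$ is the conjugate transpose and $R(\cdot)$ the range. *)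

From HB Require Import structures.
From mathcomp Require Import all_boot all_order all_algebra.
From mathcomp Require Import reals.
From mathcomp.real_closed Require Import complex.
Set Implicit Arguments. Unset Strict Implicit. Unset Printing Implicit Defensive.
Import Order.TTheory GRing.Theory Num.Theory.
Local Open Scope ring_scope.

Section Defs.
Variables (C : numClosedFieldType) (n : nat).
Implicit Types A B X Y : 'M[C]_n.

(* ind(A): smallest k with rank(A^k) = rank(A^(k+1)); such k <= n always exists. *)
Definition mxindex A : nat :=
  find (fun k => \rank (A ^+ k) == \rank (A ^+ k.+1)) (iota 0 n.+1).

Definition ctmx A : 'M[C]_n := (map_mx Num.conj A)^T.

(* R(X) <= R(Y) for column spaces (mathcomp's <=%MS is about row spaces) *)
Definition colsub A B : Prop := (A^T <= B^T)%MS.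

Definition g1inv A X : Prop := A *m X *m A = A.

Definition gdinv A X : Prop :=
  A *m X *m A = A /\ X *m A ^+ (mxindex A).+1 = A ^+ mxindex A
  /\ A ^+ (mxindex A).+1 *m X = A ^+ mxindex A.

Definition gd1inv A X : Prop :=
  exists G Am, gdinv A G /\ g1inv A Am /\ X = G *m A *m Am.

Definition le_GD1 A B : Prop :=
  exists X, gd1inv A X /\ A *m X = B *m X /\ X *m A = X *m B.

Definition le_sharp A B : Prop :=
  A ^+ 2 = B *m A /\ colsub (ctmx A) (ctmx B).
End Defs.

From Pilot Require Import Defs.
From HB Require Import structures.
From mathcomp Require Import all_boot all_order all_algebra.
From mathcomp Require Import reals.
From mathcomp.real_closed Require Import complex.
Set Implicit Arguments.
Unset Strict Implicit.
Unset Printing Implicit Defensive.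

Import Order.TTheory GRing.Theory Num.Theory.
Local Open Scope ring_scope.
Local Open Scope complex_scope.

(* For ind(A) <= 1 a G-Drazin inverse of A is just a G with AGA = A,
   GA^2 = A and A^2G = A; since rank(A^2) = rank(A) we may write
   A = WA^2 = A^2Z, and G = WAZ is one.
   If A^2 = BA and A = YB, then YA = A, so GY is an inner inverse of A and
   X = GA(GY) is a GD1 inverse with AX = AGY = BX and XA = GA = XB, because
   AGA = BGA = A.
   Conversely, if X = GAA^- satisfies AX = BX and XA = XB, then
   A = AXA = BXA = BGA, so A^2 = BGA^2 = BA, and A = AXA = AXB = (AA^-)B,
   so R(A^* ) is contained in R(B^* ). *)

Section IndexAtMostOne.
Variables (C : numClosedFieldType) (n : nat).
Implicit Types A B G : 'M[C]_n.

Lemma mxindex_rank A : (mxindex A <= n)%N ->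
  \rank (A ^+ mxindex A) = \rank (A ^+ (mxindex A).+1).
Proof.
move=> le_idx_n.
have hasP : has (fun k => \rank (A ^+ k) == \rank (A ^+ k.+1)) (iota 0 n.+1).
  by rewrite has_find size_iota.
by apply/eqP; have := nth_find 0%N hasP; rewrite nth_iota.
Qed.

Lemma mxindex_le1_rank A : (mxindex A <= 1)%N ->
  \rank (A ^+ mxindex A) = \rank (A ^+ (mxindex A).+1).
Proof.
move=> le_idx_1; have [n0 | n_gt0] := posnP n.
  have rank0 (M : 'M[C]_n) : \rank M = 0%N.
    by apply/eqP; rewrite -leqn0 -[X in (_ <= X)%N]n0 rank_leq_row.
  by rewrite !rank0.
exact/mxindex_rank/(leq_trans le_idx_1).
Qed.

Lemma mxindex0_unitmx A : mxindex A = 0%N -> A \in unitmx.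
Proof.
move=> idx0; have := @mxindex_le1_rank A; rewrite idx0 => /(_ isT).
rewrite expr0 expr1 -idmxE mxrank1 => rkA.
by rewrite -row_free_unit /row_free -rkA.
Qed.

Lemma mxindex_le1_rank_sqr A : (mxindex A <= 1)%N -> \rank (A *m A) = \rank A.
Proof.
move=> le_idx_1; have [idx0 | idx_gt0] := posnP (mxindex A).
  have unitA := mxindex0_unitmx idx0.
  by rewrite (mxrank_unit unitA) mxrank_unit // unitmx_mul unitA.
have idx1 : mxindex A = 1%N by apply/eqP; rewrite eqn_leq le_idx_1 idx_gt0.
by have := mxindex_le1_rank le_idx_1; rewrite idx1 expr1 expr2 -mulmxE => ->.
Qed.

Lemma gdinv_mxindex_le1P A G : (mxindex A <= 1)%N ->
  gdinv A G <-> [/\ A *m G *m A = A, G *m (A *m A) = A & A *m A *m G = A].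
Proof.
rewrite /gdinv; case idxA: (mxindex A) => [|[|//]] _; last first.
  by rewrite expr1 expr2 -mulmxE; split=> [[? [? ?]] | [? ? ?]].
have unitA := mxindex0_unitmx idxA; rewrite expr0 expr1.
split=> [[AGA [GA AG]] | [AGA _ _]].
  split=> //; first by rewrite mulmxA GA mul1mx.
  by rewrite -mulmxA AG mulmx1.
split=> //; split.
  by rewrite -[G *m A](mulKmx unitA) (mulmxA A G) AGA mulVmx.
by rewrite -[A *m G](mulmxK unitA) /= AGA mulmxV.
Qed.

Lemma sqr_rank_factors A : \rank (A *m A) = \rank A ->
  exists W Z, A = W *m (A *m A) /\ A = A *m A *m Z.
Proof.
have sqr_rowspace (M : 'M[C]_n) : \rank (M *m M) = \rank M -> (M <= M *m M)%MS.
  by move=> rkM; have [_ <-] := mxrank_leqif_sup (submxMl M M); rewrite rkM.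
move=> rkA; have /submxP[W defA] := sqr_rowspace A rkA.
have rkAt : \rank (A^T *m A^T) = \rank A^T by rewrite -trmx_mul !mxrank_tr.
have /submxP[Zt defAt] := sqr_rowspace A^T rkAt.
exists W, Zt^T; split=> //.
by rewrite -[A]trmxK {1}defAt !trmx_mul trmxK.
Qed.

Lemma gdinv_mxindex_le1_exists A : (mxindex A <= 1)%N -> exists G, gdinv A G.
Proof.
move=> le_idx_1.
have rkA := mxindex_le1_rank_sqr le_idx_1.
have [W [Z [AW AZ]]] := sqr_rank_factors rkA.
have WA_AZ : W *m A = A *m Z by rewrite [in LHS]AZ !mulmxA -(mulmxA W) -AW.
have AZA : A *m Z *m A = A by rewrite -WA_AZ -mulmxA -AW.
have AWA : A *m W *m A = A by rewrite -mulmxA WA_AZ mulmxA -AZ.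
have GA : W *m A *m Z *m A = W *m A by rewrite -!mulmxA (mulmxA A Z) AZA.
have AG : A *m (W *m A *m Z) = A *m Z by rewrite !mulmxA AWA.
exists (W *m A *m Z); apply/gdinv_mxindex_le1P => //; split.
- by rewrite AG AZA.
- by rewrite mulmxA GA -mulmxA -AW.
- by rewrite -mulmxA AG mulmxA -AZ.
Qed.

Lemma colsub_ctmx A B : Defs.colsub (ctmx A) (ctmx B) <-> (A <= B)%MS.
Proof.
by rewrite /Defs.colsub /ctmx !trmxK (map_submx Num.conj).
Qed.

Lemma le_sharp_le_GD1 A B : (mxindex A <= 1)%N -> le_sharp A B -> le_GD1 A B.
Proof.
move=> le_idx_1 [sqrA /colsub_ctmx/submxP[Y AYB]].
have {}sqrA : A *m A = B *m A by rewrite -sqrA expr2 mulmxE.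
have [G gdG] := gdinv_mxindex_le1_exists le_idx_1.
have [AGA GAA AAG] := (gdinv_mxindex_le1P G le_idx_1).1 gdG.
have BGA : B *m G *m A = A.
  have GA_AG : G *m A = A *m G.
    by rewrite -{1}AAG !mulmxA -(mulmxA G A A) GAA.
  by rewrite -mulmxA GA_AG mulmxA -sqrA AAG.
have YA : Y *m A = A by rewrite -{1}AAG sqrA !mulmxA -AYB.
exists (G *m A *m (G *m Y)); split; last split.
- exists G, (G *m Y); split=> //; split=> //.
  by rewrite /g1inv !mulmxA -(mulmxA _ Y) YA.
- by rewrite !mulmxA AGA BGA.
- by rewrite -!mulmxA YA -AYB.
Qed.

Lemma le_GD1_le_sharp A B : (mxindex A <= 1)%N -> le_GD1 A B -> le_sharp A B.
Proof.
move=> le_idx_1 [_ [[G [Am [gdG [AAmA ->]]]] [AX_BX XA_XB]]].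
have [AGA GAA _] := (gdinv_mxindex_le1P G le_idx_1).1 gdG.
have AXA : A *m (G *m A *m Am) *m A = A by rewrite !mulmxA AGA AAmA.
have BGA : B *m G *m A = A.
  by rewrite -{2}AXA AX_BX -!mulmxA (mulmxA A Am) AAmA mulmxA.
split.
- by rewrite expr2 -mulmxE -{1}BGA -!mulmxA GAA.
- apply/colsub_ctmx/submxP; exists (A *m Am).
  by rewrite -{1}AXA -mulmxA XA_XB !mulmxA AGA.
Qed.

End IndexAtMostOne.

Theorem theorem2p14 (R : realType) (n : nat) (A B : 'M[R[i]]_n) :
  (mxindex A <= 1)%N -> (mxindex B <= 1)%N ->
  (le_sharp A B <-> le_GD1 A B).
Proof.
move=> le_idxA_1 _.
by split; [apply: le_sharp_le_GD1 | apply: le_GD1_le_sharp].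
Qed.
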